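(* Let $q\ge1$, $u,v\in\{1,\dots,q\}$, $p_1,p_2\in[0,1]$, and let $X_1\sim\mathrm{Binomial}(u,p_1)$ and $X_2\sim\mathrm{Binomial}(v,p_2)$ be independent. Let $p^*=\min\{\max\{p_1,1-p_1\},\max\{p_2,1-p_2\}\}$. Then $\Pr[X_1\neq X_2]\ge1-\sqrt{p^*}$.
   Context: $\mathrm{Binomial}(n,p)$ is the sum of $n$ i.i.d. $\{0,1\}$-valued random variables each with mean $p$. *)

From mathcomp Require Import all_boot all_order all_algebra.
Set Implicit Arguments. Unset Strict Implicit. Unset Printing Implicit Defensive.
Import Order.TTheory GRing.Theory Num.Theory.
Local Open Scope ring_scope.

Definition binom_pmf (R : numDomainType) (n : nat) (p : R) (k : nat) : R :=
  ('C(n, k))%:R * p ^+ k * (1 - p) ^+ (n - k).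

Definition prob_binom_neq (R : numDomainType) (u v : nat) (p1 p2 : R) : R :=
  \sum_(i < u.+1) \sum_(j < v.+1)
     (if (i : nat) != (j : nat) then binom_pmf u p1 i * binom_pmf v p2 j else 0).

(** If [X1 ~ Binomial(u, p1)] with [u >= 1], every value of its mass function
    is at most [max(p1, 1 - p1)]: by Pascal's rule it is a convex combination
    of [p1] and [1 - p1] with weights two consecutive masses of
    [Binomial(u - 1, p1)], whose sum is at most 1.  Hence
    [Pr[X1 = X2] = sum_i Pr[X1 = i] Pr[X2 = i]] is at most
    [max(p1, 1 - p1)], and symmetrically at most [max(p2, 1 - p2)], so
    [Pr[X1 <> X2] >= 1 - p* >= 1 - sqrt p*] as [p*] lies in [[0, 1]]. *)

From mathcomp Require Import all_boot all_order all_algebra.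
From mathcomp Require Import ring lra.
Import Order.TTheory GRing.Theory Num.Theory.
Local Open Scope ring_scope.

Definition prob_binom_eq {R : numDomainType} (u v : nat) (p1 p2 : R) : R :=
  \sum_(i < u.+1) binom_pmf u p1 i * binom_pmf v p2 i.

Section BinomialMass.
Context {R : numDomainType}.
Implicit Types (p : R) (n k : nat).

Lemma binom_pmf_ge0 n p k : 0 <= p <= 1 -> 0 <= binom_pmf n p k.
Proof.
by case/andP=> p_ge0 p_le1; rewrite !mulr_ge0 ?exprn_ge0 ?ler0n ?subr_ge0.
Qed.

Lemma binom_pmf_small n p k : (n < k)%N -> binom_pmf n p k = 0.
Proof. by move=> lt_nk; rewrite /binom_pmf bin_small // !mul0r. Qed.

Lemma sum_binom_pmf n p : \sum_(k < n.+1) binom_pmf n p k = 1.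
Proof.
have := exprDn (1 - p) p n; rewrite subrK expr1n => ->.
by apply: eq_bigr => k _; rewrite /binom_pmf -mulr_natl; ring.
Qed.

Lemma sum_binom_pmf_le1 n p N : 0 <= p <= 1 ->
  \sum_(k < N) binom_pmf n p k <= 1.
Proof.
move=> p01; rewrite -(sum_binom_pmf n p) -!(big_mkord xpredT).
have -> : \sum_(0 <= k < n.+1) binom_pmf n p k = \sum_(0 <= k < N + n.+1) binom_pmf n p k.
  rewrite (big_cat_nat (leq0n n.+1) (leq_addl N n.+1)) /=.
  rewrite [X in _ = _ + X](big1_seq (R:=R)) ?addr0 // => k /andP[_].
  by rewrite mem_iota => /andP[/binom_pmf_small].
rewrite (big_cat_nat (leq0n N) (leq_addr n.+1 N)) /= lerDl.
by apply: sumr_ge0 => k _; exact: binom_pmf_ge0.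
Qed.

Lemma binom_pmf_adjacent_le1 n p k : 0 <= p <= 1 ->
  binom_pmf n p k + binom_pmf n p k.+1 <= 1.
Proof.
move=> p01; apply: le_trans (sum_binom_pmf_le1 n p k.+2 p01).
rewrite !big_ord_recr /= -addrA lerDr.
by apply: sumr_ge0 => i _; exact: binom_pmf_ge0.
Qed.

Lemma binom_pmfS0 n p : binom_pmf n.+1 p 0 = (1 - p) * binom_pmf n p 0.
Proof. by rewrite /binom_pmf !bin0 !subn0 exprS; ring. Qed.

Lemma binom_pmfSS n p k :
  binom_pmf n.+1 p k.+1 = p * binom_pmf n p k + (1 - p) * binom_pmf n p k.+1.
Proof.
rewrite /binom_pmf binS natrD subSS.
have [lt_kn | le_nk] := ltnP k n.
  by rewrite -(subnSK lt_kn) !exprS; ring.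
by rewrite (bin_small (n:=n) (m:=k.+1)) ?ltnS // exprS; ring.
Qed.

Lemma sum_binom_pmf_neq n p (i : nat) :
  \sum_(j < n.+1) (if i != j :> nat then binom_pmf n p j else 0) = 1 - binom_pmf n p i.
Proof.
rewrite -big_mkcond; have := sum_binom_pmf n p.
rewrite (bigID (fun j : 'I_n.+1 => j == i :> nat)) /= big_ord1_eq => <-.
have -> : (if (i < n.+1)%N then binom_pmf n p i else 0) = binom_pmf n p i.
  by case: ltnP => // lt_ni; rewrite binom_pmf_small.
by rewrite addrC addrK; apply: eq_bigl => j; rewrite eq_sym.
Qed.

Lemma prob_binom_neqE u v p1 p2 :
  prob_binom_neq u v p1 p2 = 1 - prob_binom_eq u v p1 p2.
Proof.
rewrite /prob_binom_neq /prob_binom_eq -(sum_binom_pmf u p1) -sumrB.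
apply: eq_bigr => i _.
rewrite -[X in _ = X - _]mulr1 -mulrBr -sum_binom_pmf_neq mulr_sumr.
by apply: eq_bigr => j _; case: ifP; rewrite ?mulr0.
Qed.

End BinomialMass.

Lemma binom_pmf_le_max (R : realDomainType) n (p : R) k : 0 <= p <= 1 ->
  binom_pmf n.+1 p k <= Num.max p (1 - p).
Proof.
move=> p01; have /andP[p_ge0 p_le1] := p01.
have le_p : p <= Num.max p (1 - p) by rewrite le_max lexx.
have le_1p : 1 - p <= Num.max p (1 - p) by rewrite le_max lexx orbT.
case: k => [|k].
  have a0 := binom_pmf_ge0 n p 0 p01; have a1 := binom_pmf_ge0 n p 1 p01.
  have := binom_pmf_adjacent_le1 n p 0 p01.
  rewrite binom_pmfS0; nra.
have ak := binom_pmf_ge0 n p k p01; have ak1 := binom_pmf_ge0 n p k.+1 p01.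
have := binom_pmf_adjacent_le1 n p k p01.
rewrite binom_pmfSS; nra.
Qed.

Lemma ler_sum_mul_max (R : numDomainType) (I : Type) (r : seq I) (F G : I -> R) M :
  0 <= M -> (forall i, F i <= M) -> (forall i, 0 <= G i) ->
  \sum_(i <- r) G i <= 1 -> \sum_(i <- r) F i * G i <= M.
Proof.
move=> M_ge0 le_FM G_ge0 sumG_le1.
apply: le_trans (_ : \sum_(i <- r) M * G i <= M).
  by apply: ler_sum => i _; rewrite ler_wpM2r.
by rewrite -mulr_sumr ler_piMr.
Qed.

Lemma max_onem_ge0 (R : realDomainType) (p : R) : 0 <= p -> 0 <= Num.max p (1 - p).
Proof. by move=> p_ge0; rewrite le_max p_ge0. Qed.

Lemma max_onem_le1 (R : realDomainType) (p : R) : 0 <= p <= 1 -> Num.max p (1 - p) <= 1.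
Proof. by case/andP=> p_ge0 p_le1; rewrite ge_max p_le1 lerBlDr lerDl. Qed.

Lemma prob_binom_eq_le_max1 (R : realDomainType) u v (p1 p2 : R) :
  0 <= p1 <= 1 -> 0 <= p2 <= 1 ->
  prob_binom_eq u.+1 v p1 p2 <= Num.max p1 (1 - p1).
Proof.
move=> p1_01 p2_01; apply: ler_sum_mul_max => [||i|].
- by case/andP: p1_01 => /max_onem_ge0.
- by move=> i; apply: binom_pmf_le_max.
- exact: binom_pmf_ge0.
- exact: sum_binom_pmf_le1.
Qed.

Lemma prob_binom_eq_le_max2 (R : realDomainType) u v (p1 p2 : R) :
  0 <= p1 <= 1 -> 0 <= p2 <= 1 ->
  prob_binom_eq u v.+1 p1 p2 <= Num.max p2 (1 - p2).
Proof.
move=> p1_01 p2_01; rewrite /prob_binom_eq.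
under eq_bigr => i _ do rewrite mulrC.
apply: ler_sum_mul_max => [||i|].
- by case/andP: p2_01 => /max_onem_ge0.
- by move=> i; apply: binom_pmf_le_max.
- exact: binom_pmf_ge0.
- by rewrite sum_binom_pmf.
Qed.

Lemma sqrtr_ge_id (R : rcfType) (x : R) : 0 <= x <= 1 -> x <= Num.sqrt x.
Proof.
case/andP=> x_ge0 x_le1.
have sqrt_le1 : Num.sqrt x <= 1 by rewrite -sqrtr1 ler_sqrt.
by rewrite -{1}(sqr_sqrtr x_ge0) expr2 ler_piMr ?sqrtr_ge0.
Qed.

Theorem lemma15 (R : rcfType) (q u v : nat) (p1 p2 : R) :
  (1 <= q)%N ->
  (1 <= u <= q)%N -> (1 <= v <= q)%N ->
  0 <= p1 <= 1 -> 0 <= p2 <= 1 ->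
  let pstar := Num.min (Num.max p1 (1 - p1)) (Num.max p2 (1 - p2)) in
  1 - Num.sqrt pstar <= prob_binom_neq u v p1 p2.
Proof.
move=> _ /andP[u_gt0 _] /andP[v_gt0 _] p1_01 p2_01 /=; set pstar := Num.min _ _.
have pstar_01 : 0 <= pstar <= 1.
  rewrite le_min !max_onem_ge0 ?(andP p1_01).1 ?(andP p2_01).1 //=.
  by rewrite ge_min max_onem_le1.
have eq_le_pstar : prob_binom_eq u v p1 p2 <= pstar.
  case: u u_gt0 => // u _; case: v v_gt0 => // v _.
  by rewrite le_min prob_binom_eq_le_max1 ?prob_binom_eq_le_max2.
rewrite prob_binom_neqE lerD2l lerN2.
by apply: le_trans eq_le_pstar _; apply: sqrtr_ge_id.
Qed.
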